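(* Let $(X,d,\mu)$ be a coarse median space with parameters $\rho,H$. Then for every $n\geqslant1$ there exists a constant $C_n$ depending on $\rho,H$ (and $n$) such that for all $a,b,e_1,\ldots,e_{n+1}\in X$, $$\mu\big(a,e_{n+1},\mu(e_1,\ldots,e_n;b)\big)\sim_{C_n}\mu\big(\mu(a,e_{n+1},e_1),\ldots,\mu(a,e_{n+1},e_n);b\big).$$
   Context: Write $x\sim_s y$ if $d(x,y)\leqslant s$. A coarse median space is a triple $(X,d,\mu)$ with $(X,d)$ a metric space and $\mu\colon X^3\to X$ satisfying: (M1) $\mu(a,a,b)=a$; (M2) $\mu(a_1,a_2,a_3)$ is invariant under permutations of its arguments; (C1) there is an affine $\rho(t)=Kt+H_0$ with $d(\mu(a,b,c),\mu(a',b',c'))\leqslant\rho(d(a,a')+d(b,b')+d(c,c'))$ for all points; (C2) there is $H\colon\mathbb N\to[0,\infty)$ such that for every finite $A\subseteq X$ with $1\leqslant|A|\leqslant p$ there are a finite median algebra $(\Pi,\mu_\Pi)$ and maps $\pi\colon A\to\Pi$, $\lambda\colon\Pi\to X$ with $\lambda\mu_\Pi(x,y,z)\sim_{H(p)}\mu(\lambda x,\lambda y,\lambda z)$ for all $x,y,z\in\Pi$ and $\lambda\pi a\sim_{H(p)}a$ for all $a\in A$. Functions $\rho,H$ as in (C1),(C2) are called parameters. (A median algebra is a set with a ternary operation $m$ satisfying $m(a,a,b)=a$, full symmetry, and $m(m(a,b,c),b,d)=m(a,b,m(c,b,d))$.) The iterated coarse median is $\mu(x_1;b)=x_1$ and $\mu(x_1,\ldots,x_{k+1};b)=\mu(\mu(x_1,\ldots,x_k;b),x_{k+1},b)$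 for $k\geqslant1$. *)

From Stdlib Require Import Reals List.
Import ListNotations.
Open Scope R_scope.

Definition close {X : Type} (d : X -> X -> R) (s : R) (x y : X) : Prop := d x y <= s.

Definition is_metric {X : Type} (d : X -> X -> R) : Prop :=
  (forall x y, 0 <= d x y) /\
  (forall x y, d x y = 0 <-> x = y) /\
  (forall x y, d x y = d y x) /\
  (forall x y z, d x z <= d x y + d y z).

Definition is_median_algebra {P : Type} (m : P -> P -> P -> P) : Prop :=
  (forall a b, m a a b = a) /\
  (forall a b c, m a b c = m b a c /\ m a b c = m a c b) /\
  (forall a b c d, m (m a b c) b d = m a b (m c b d)).

Definition finite_type (P : Type) : Prop := exists l : list P, forall x, In x l.

(* Coarse median space with parameters rho(t) = K t + H0 and H. *)
Definition coarse_median {X : Type} (d : X -> X -> R) (mu : X -> X -> X -> X)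
  (K H0 : R) (H : nat -> R) : Prop :=
  is_metric d /\
  (forall a b, mu a a b = a) /\
  (* M2 : invariance under all permutations (generated by two transpositions) *)
  (forall a b c, mu a b c = mu b a c /\ mu a b c = mu a c b) /\
  (forall p, 0 <= H p) /\
  (forall a b c a' b' c',
      d (mu a b c) (mu a' b' c') <= K * (d a a' + d b b' + d c c') + H0) /\
  (* C2 : A a finite subset of X given by a duplicate-free list *)
  (forall (p : nat) (A : list X), NoDup A -> (1 <= length A <= p)%nat ->
     exists (P : Type) (m : P -> P -> P -> P) (pi : X -> P) (lam : P -> X),
       finite_type P /\ is_median_algebra m /\
       (forall x y z : P, close d (H p) (lam (m x y z)) (mu (lam x) (lam y) (lam z))) /\
       (forall a, In a A -> close d (H p) (lam (pi a)) a)).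

(* iter_mu0 mu b x k = mu(x 0, x 1, ..., x k ; b)  (k+1 arguments) *)
Fixpoint iter_mu0 {X : Type} (mu : X -> X -> X -> X) (b : X) (x : nat -> X) (k : nat) : X :=
  match k with
  | O => x O
  | S k' => mu (iter_mu0 mu b x k') (x (S k')) b
  end.

(* iterated coarse median mu(x_1,...,x_n ; b), with x_i := x (i-1); meaningful for n >= 1 *)
Definition iter_mu {X : Type} (mu : X -> X -> X -> X) (x : nat -> X) (n : nat) (b : X) : X :=
  iter_mu0 mu b x (n - 1).

(* In a median algebra the gate map [m a e] onto the interval [[a, e]] satisfies the exact
   identity [m a e (m x y b) = m (m a e x) (m a e y) b]: both sides lie pairwise between
   [m a e x], [m a e y] and [b], and the median is the only such point.  This rests on the
   semilattices [(x, y) |-> m x r y] given by the associativity axiom and on the gate property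
   that [m o x y] lies between [o] and every point of [[x, y]].
   Axiom (C2) for the five points [a, e, x, y, b] transports the identity to a coarse median
   space with an error depending only on [rho] and [H 5], and the iterated statement follows
   by induction on [n], each step adding this error to the (C1)-image of the previous one. *)

From Stdlib Require Import Reals List Lra Lia ClassicalEpsilon.
Import ListNotations.
Open Scope R_scope.

Section MedianAlgebra.

Variables (P : Type) (m : P -> P -> P -> P).
Hypothesis median_algebra_m : is_median_algebra m.

Lemma m_xxy x y : m x x y = x.
Proof. apply median_algebra_m. Qed.

Lemma m_swap12 x y z : m x y z = m y x z.
Proof. apply median_algebra_m. Qed.

Lemma m_swap23 x y z : m x y z = m x z y.
Proof. apply median_algebra_m. Qed.

Lemma m_swap13 x y z : m x y z = m z y x.
Proof. rewrite m_swap12, m_swap23, m_swap12. reflexivity. Qed.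

Lemma m_rotate x y z : m x y z = m y z x.
Proof. rewrite m_swap12, m_swap23. reflexivity. Qed.

Lemma m_assoc x r y z : m (m x r y) r z = m x r (m y r z).
Proof. apply median_algebra_m. Qed.

Lemma m_xyx x y : m x y x = x.
Proof. rewrite m_swap23. apply m_xxy. Qed.

Lemma m_yxx x y : m y x x = x.
Proof. rewrite m_swap13. apply m_xxy. Qed.

Lemma m_absorb x r y : m x r (m x r y) = m x r y.
Proof. rewrite <- m_assoc, m_xyx. reflexivity. Qed.

(* [between r s t] says that [s] lies in the interval [[r, t]]; for fixed [r] it is the order
   of the semilattice [(x, y) |-> m x r y] with least element [r]. *)
Definition between (r s t : P) : Prop := m s r t = s.

Lemma between_sym r s t : between r s t -> between t s r.
Proof. unfold between. rewrite m_swap23. trivial. Qed.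

Lemma between_median_l r s t : between r (m s r t) s.
Proof. unfold between. rewrite m_assoc, (m_swap13 t), m_absorb. reflexivity. Qed.

Lemma between_median_r r s t : between r (m s r t) t.
Proof. unfold between. rewrite m_assoc, m_xyx. reflexivity. Qed.

Lemma between_median r s t : between r (m r s t) s.
Proof. rewrite (m_swap12 r s t). apply between_median_l. Qed.

Lemma between_trans r s t u : between r s t -> between r t u -> between r s u.
Proof. unfold between. intros Hst Htu. rewrite <- Hst at 1. rewrite m_assoc, Htu. exact Hst. Qed.

Lemma between_meet r s t u : between r s t -> between r s u -> between r s (m t r u).
Proof. unfold between. intros Hst Hsu. rewrite <- m_assoc, Hst. exact Hsu. Qed.

Lemma between_base r s : between r s r -> s = r.
Proof. unfold between. rewrite m_yxx. auto. Qed.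

(* The gate [g := m o x y] of [o] in [[x, y]]: in the semilattice based at [g], both [o] and
   [x] meet to the least element. *)
Lemma gate_between_median o x y t : between o (m o x y) (m x t (m o x y)).
Proof.
  set (g := m o x y).
  assert (Hox : m o g x = g) by (unfold g; rewrite m_swap23, m_absorb; reflexivity).
  unfold between. rewrite m_swap12, (m_swap23 x), <- m_assoc, Hox. apply m_xxy.
Qed.

Lemma gate_between o x y w : between x w y -> between o (m o x y) w.
Proof.
  intros Hw.
  assert (Hgw : m (m o x y) x w = m o x w).
  { rewrite m_assoc, (m_swap13 y), Hw. reflexivity. }
  apply between_trans with (m o x w).
  - pose proof (gate_between_median o x y w) as H.
    rewrite (m_swap23 x), (m_swap12 x), Hgw in H. exact H.
  - rewrite m_swap12. apply between_median_r.
Qed.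

(* Argue in the semilattice based at [m a e c], where [m a e x] and [m a e y] meet to it. *)
Lemma gate_between_mono a e x y c :
  between x c y -> between (m a e x) (m a e c) (m a e y).
Proof.
  intros Hc.
  set (gx := m a e x). set (gy := m a e y). set (gc := m a e c).
  assert (Hx : between gc gx x).
  { apply between_sym. unfold gx. rewrite <- (m_rotate x a e). apply gate_between, between_median. }
  assert (Hy : between gc gy y).
  { apply between_sym. unfold gy. rewrite <- (m_rotate y a e). apply gate_between, between_median. }
  assert (Hcgx : m c gc gx = gc).
  { rewrite m_swap12. unfold gc. rewrite <- (m_rotate c a e). apply gate_between, between_median. }
  assert (Hxyc : between gc (m x gc y) c).
  { rewrite m_swap12. apply gate_between, Hc. }
  set (w := m gx gc gy).
  assert (Hwx : between gc w x) by exact (between_trans _ _ _ _ (between_median_l _ _ _) Hx).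
  assert (Hwy : between gc w y) by exact (between_trans _ _ _ _ (between_median_r _ _ _) Hy).
  assert (Hwc : between gc w c) by exact (between_trans _ _ _ _ (between_meet _ _ _ _ Hwx Hwy) Hxyc).
  assert (Hw : between gc w gc).
  { rewrite <- Hcgx at 2. apply between_meet; [exact Hwc | apply between_median_l]. }
  unfold between. rewrite m_swap12. exact (between_base _ _ Hw).
Qed.

Lemma median_unique p q b t :
  between p t q -> between q t b -> between p t b -> t = m p q b.
Proof.
  unfold between. intros Hpq Hqb Hpb.
  set (s := m p q b).
  assert (Hsq : between s t q).
  { apply between_sym. unfold between, s.
    rewrite m_swap13, m_assoc, (m_swap13 b), Hqb, m_swap13, m_swap23. exact Hpq. }
  assert (Hsp : between s t p).
  { apply between_sym. unfold between, s.
    rewrite m_swap13, (m_swap12 p), m_assoc, (m_swap13 b), Hpb, m_swap13. exact Hpq. }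
  apply between_base.
  replace s with (m q s p) at 2 by (unfold s; rewrite m_rotate; apply between_median).
  exact (between_meet _ _ _ _ Hsq Hsp).
Qed.

Lemma median_gate_distrib a e x y b : m a e (m x y b) = m (m a e x) (m a e y) b.
Proof.
  set (gx := m a e x). set (gy := m a e y). set (gb := m a e b).
  assert (Hgb : forall g, between a g e -> between g gb b).
  { intros g Hg. apply between_sym. unfold gb. rewrite <- (m_rotate b a e). apply gate_between, Hg. }
  apply median_unique.
  - apply gate_between_mono, between_median.
  - apply between_trans with gb; [| apply Hgb, between_median].
    apply gate_between_mono. rewrite (m_rotate x y b). apply between_median.
  - apply between_trans with gb; [| apply Hgb, between_median].
    apply gate_between_mono. rewrite (m_swap23 x y b). apply between_median.
Qed.

End MedianAlgebra.

Definition approx_step (K H0 h D : R) : R := Rabs K * D + H0 + h.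

(* Both sides are compared with the image under [lam] of the corresponding median expression
   in an approximating median algebra of the five points, each leaf being [h]-close. *)
Definition gate_distrib_const (K H0 h : R) : R :=
  let s := approx_step K H0 h in
  s (h + h + s (h + h + h)) + s (s (h + h + h) + s (h + h + h) + h).

Fixpoint iter_gate_const (K H0 c : R) (k : nat) : R :=
  match k with
  | O => 0
  | S k => c + Rabs K * iter_gate_const K H0 c k + H0
  end.

Lemma exists_nodup_incl (X : Type) (l : list X) :
  exists l', NoDup l' /\ incl l l' /\ (length l' <= length l)%nat.
Proof.
  set (dec := fun x y : X => excluded_middle_informative (x = y)).
  exists (nodup dec l). split; [apply NoDup_nodup |]. split.
  - intros x. apply nodup_In.
  - apply NoDup_incl_length; [apply NoDup_nodup |]. intros x. apply nodup_In.
Qed.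

Section CoarseMedian.

Variables (X : Type) (d : X -> X -> R) (mu : X -> X -> X -> X) (K H0 : R) (H : nat -> R).
Hypothesis coarse_median_mu : coarse_median d mu K H0 H.

Lemma dist_nonneg x y : 0 <= d x y.
Proof. apply coarse_median_mu. Qed.

Lemma dist_refl x : d x x = 0.
Proof. apply coarse_median_mu. reflexivity. Qed.

Lemma dist_sym x y : d x y = d y x.
Proof. apply coarse_median_mu. Qed.

Lemma dist_triangle x y z : d x z <= d x y + d y z.
Proof. apply coarse_median_mu. Qed.

Lemma mu_lipschitz a b c a' b' c' :
  d (mu a b c) (mu a' b' c') <= Rabs K * (d a a' + d b b' + d c c') + H0.
Proof.
  pose proof (dist_nonneg a a'). pose proof (dist_nonneg b b'). pose proof (dist_nonneg c c').
  assert (K * (d a a' + d b b' + d c c') <= Rabs K * (d a a' + d b b' + d c c'))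
    by (apply Rmult_le_compat_r; [lra | apply Rle_abs]).
  pose proof (proj1 (proj2 (proj2 (proj2 (proj2 coarse_median_mu)))) a b c a' b' c').
  lra.
Qed.

Lemma approx_median_step (P : Type) (m : P -> P -> P -> P) (lam : P -> X) (h : R)
  (Hlam : forall x y z : P, close d h (lam (m x y z)) (mu (lam x) (lam y) (lam z)))
  (u v w : X) (u' v' w' : P) (Du Dv Dw : R) :
  d u (lam u') <= Du -> d v (lam v') <= Dv -> d w (lam w') <= Dw ->
  d (mu u v w) (lam (m u' v' w')) <= approx_step K H0 h (Du + Dv + Dw).
Proof.
  intros Hu Hv Hw. unfold approx_step.
  pose proof (dist_triangle (mu u v w) (mu (lam u') (lam v') (lam w')) (lam (m u' v' w'))).
  pose proof (mu_lipschitz u v w (lam u') (lam v') (lam w')).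
  pose proof (Hlam u' v' w') as Hm. unfold close in Hm. rewrite dist_sym in Hm.
  assert (Rabs K * (d u (lam u') + d v (lam v') + d w (lam w')) <= Rabs K * (Du + Dv + Dw))
    by (apply Rmult_le_compat_l; [apply Rabs_pos | lra]).
  lra.
Qed.

Lemma coarse_gate_distrib a e x y b :
  d (mu a e (mu x y b)) (mu (mu a e x) (mu a e y) b) <= gate_distrib_const K H0 (H 5%nat).
Proof.
  destruct (exists_nodup_incl X [a; e; x; y; b]) as [A [HA [Hincl Hlen]]].
  assert (Hsize : (1 <= length A <= 5)%nat).
  { split; [| exact Hlen].
    destruct A as [| z A]; simpl; [| lia].
    destruct (Hincl a (or_introl eq_refl)). }
  destruct (proj2 (proj2 (proj2 (proj2 (proj2 coarse_median_mu)))) 5%nat A HA Hsize)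
    as [P [m [pi [lam [_ [Hm [Hlam Hpi]]]]]]].
  set (h := H 5%nat) in *.
  assert (Hpt : forall z, In z [a; e; x; y; b] -> d z (lam (pi z)) <= h).
  { intros z Hz. rewrite dist_sym. apply Hpi, Hincl, Hz. }
  assert (ha := Hpt a ltac:(simpl; tauto)). assert (he := Hpt e ltac:(simpl; tauto)).
  assert (hx := Hpt x ltac:(simpl; tauto)). assert (hy := Hpt y ltac:(simpl; tauto)).
  assert (hb := Hpt b ltac:(simpl; tauto)).
  pose proof (approx_median_step P m lam h Hlam) as Happrox.
  pose proof (Happrox _ _ _ _ _ _ _ _ _ ha he (Happrox _ _ _ _ _ _ _ _ _ hx hy hb)) as Hl.
  pose proof (Happrox _ _ _ _ _ _ _ _ _
                (Happrox _ _ _ _ _ _ _ _ _ ha he hx) (Happrox _ _ _ _ _ _ _ _ _ ha he hy) hb) as Hr.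
  rewrite <- (median_gate_distrib P m Hm) in Hr.
  pose proof (dist_triangle (mu a e (mu x y b)) (lam (m (pi a) (pi e) (m (pi x) (pi y) (pi b))))
                (mu (mu a e x) (mu a e y) b)) as Htri.
  rewrite (dist_sym (lam _)) in Htri.
  unfold gate_distrib_const. lra.
Qed.

Lemma coarse_gate_iter_mu a c b (e : nat -> X) (k : nat) :
  d (mu a c (iter_mu0 mu b e k)) (iter_mu0 mu b (fun i => mu a c (e i)) k)
  <= iter_gate_const K H0 (gate_distrib_const K H0 (H 5%nat)) k.
Proof.
  induction k as [| k IH]; simpl.
  - rewrite dist_refl. lra.
  - set (I := iter_mu0 mu b e k) in *.
    set (J := iter_mu0 mu b (fun i => mu a c (e i)) k) in *.
    pose proof (coarse_gate_distrib a c I (e (S k)) b).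
    set (ce := mu a c (e (S k))) in *.
    pose proof (mu_lipschitz (mu a c I) ce b J ce b) as Hstep. rewrite !dist_refl in Hstep.
    pose proof (dist_triangle (mu a c (mu I (e (S k)) b)) (mu (mu a c I) ce b) (mu J ce b)).
    assert (Rabs K * (d (mu a c I) J + 0 + 0)
            <= Rabs K * iter_gate_const K H0 (gate_distrib_const K H0 (H 5%nat)) k) by (apply Rmult_le_compat_l; [apply Rabs_pos | lra]).
    lra.
Qed.

End CoarseMedian.

Theorem lemma2p18 (K H0 : R) (H : nat -> R) (n : nat) (hn : (1 <= n)%nat) :
  exists C : R,
    forall (X : Type) (d : X -> X -> R) (mu : X -> X -> X -> X),
      coarse_median d mu K H0 H ->
      forall (a b : X) (e : nat -> X),
        close d C
          (mu a (e n) (iter_mu mu e n b))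
          (iter_mu mu (fun i => mu a (e n) (e i)) n b).
Proof.
  exists (iter_gate_const K H0 (gate_distrib_const K H0 (H 5%nat)) (n - 1)).
  intros X d mu Hcm a b e.
  exact (coarse_gate_iter_mu X d mu K H0 H Hcm a (e n) b e (n - 1)).
Qed.
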